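(* Let $(a_i)_{i\in\mathbb{Z}}$ and $(b_i)_{i\in\mathbb{Z}}$ be jointly stationary processes, with $a_i$ taking values in the positive integers and $b_i$ in a finite or countable alphabet, such that: (i) $(a_i)$ is i.i.d.; (ii) each $a_i$ is independent of the joint collection $\{a_j: j<i\}\cup\{b_j:j<i\}$; (iii) each $b_i$ is almost surely determined by $a_i,b_{i-1},b_{i-2},\dots,b_{i-a_i}$. Then $(b_i)_{i\in\mathbb{Z}}$ is a uniform martingale.
   Context: A stationary process $(X_i)_{i\in\mathbb{Z}}$ on a finite or countable alphabet is a uniform martingale if the conditional distribution of $X_0$ given $X_{-1},\dots,X_{-n}$ converges as $n\to\infty$ to the conditional distribution of $X_0$ given the entire past $X_{-1},X_{-2},\dots$ in total variation, uniformly over all pasts. *)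

From HB Require Import structures.
From mathcomp Require Import all_boot all_order all_algebra.
From mathcomp Require Import all_classical all_reals all_analysis.
Set Implicit Arguments. Unset Strict Implicit. Unset Printing Implicit Defensive.
Import Order.TTheory GRing.Theory Num.Theory.
Local Open Scope classical_set_scope.
Local Open Scope ring_scope.

Section Processes.
Context {R : realType} {d : measure_display} {T : measurableType d}
  (P : probability T R).

Definition discrete_process {A : Type} (X : int -> T -> A) : Prop :=
  forall (i : int) (x : A), measurable [set w | X i w = x].

Definition pr (E : set T) : R := fine (P E).

(** Joint stationarity of (a_i, b_i): all finite-dimensional distributions
    (on consecutive windows, determined by atoms since alphabets are
    countable) are shift invariant. *)
Definition jointly_stationary {A B : Type} (a : int -> T -> A) (b : int -> T -> B)
  : Prop :=
  forall (m k : int) (n : nat) (x : nat -> A) (y : nat -> B),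
    P [set w | forall j : nat, (j < n)%N ->
               a (m + j%:Z) w = x j /\ b (m + j%:Z) w = y j]
  = P [set w | forall j : nat, (j < n)%N ->
               a (m + k + j%:Z) w = x j /\ b (m + k + j%:Z) w = y j].

Definition iid {A : Type} (a : int -> T -> A) : Prop :=
  (forall (i : int) (x : A), P [set w | a i w = x] = P [set w | a 0 w = x]) /\
  (forall (s : seq int) (x : int -> A), uniq s ->
     pr [set w | forall i, i \in s -> a i w = x i]
     = \prod_(i <- s) pr [set w | a i w = x i]).

(** a_i is independent of the sigma-algebra generated by
    {a_j : j < i} U {b_j : j < i} (product rule against the generating
    pi-system of finite-dimensional atoms of the past). *)
Definition indep_of_past {A B : Type} (a : int -> T -> A) (b : int -> T -> B)
  : Prop :=
  forall (i : int) (x : A) (s : seq int) (u : int -> A) (v : int -> B),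
    all (fun j => j < i) s ->
    pr ([set w | a i w = x] `&`
        [set w | forall j, j \in s -> a j w = u j /\ b j w = v j])
    = pr [set w | a i w = x] *
      pr [set w | forall j, j \in s -> a j w = u j /\ b j w = v j].

Definition determined_by_window {B : Type} (a : int -> T -> nat)
  (b : int -> T -> B) : Prop :=
  forall i : int, exists F : nat -> seq B -> B,
    {ae P, forall w, b i w =
       F (a i w) [seq b (i - (k.+1)%:Z) w | k <- iota 0 (a i w)]}.

Definition past_cyl {B : Type} (b : int -> T -> B) (n : nat) (y : nat -> B)
  : set T :=
  [set w | forall k : nat, (k < n)%N -> b (- (k.+1)%:Z) w = y k].

Definition past_of {B : Type} (b : int -> T -> B) (w : T) : nat -> B :=
  fun k => b (- (k.+1)%:Z) w.

Definition past_sigma {B : Type} (b : int -> T -> B) : set (set T) :=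
  <<s [set C | exists n y, C = past_cyl b n y] >>.

(** Conditional distribution of b_0 given b_{-1},...,b_{-n}, evaluated at
    the past of w (elementary conditional probability; the value on the
    null set of pasts of probability 0 is irrelevant). *)
Definition cond_fin {B : Type} (b : int -> T -> B) (n : nat) (w : T) (y : B)
  : R :=
  pr ([set w' | b 0 w' = y] `&` past_cyl b n (past_of b w))
  / pr (past_cyl b n (past_of b w)).

(** h is (a version of) the regular conditional distribution of b_0 given
    the entire past: h y is measurable w.r.t. the past sigma-algebra,
    h w is a probability distribution on B for each w, and
    P(b_0 = y, C) = E[h y ; C] for every past cylinder C (these generate the
    past sigma-algebra and form a pi-system). *)
Definition cond_dist_given_past {B : choiceType} (b : int -> T -> B)
  (h : B -> T -> R) : Prop :=
  (forall (y : B) (r : R), past_sigma b [set w | h y w < r]) /\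
  (forall y w, 0 <= h y w) /\
  (forall w, (\esum_(y in [set: B]) (h y w)%:E)%E = 1%E) /\
  (forall (y : B) (n : nat) (z : nat -> B),
     P ([set w | b 0 w = y] `&` past_cyl b n z)
     = (\int[P]_(w in past_cyl b n z) (h y w)%:E)%E).

Definition tv {B : choiceType} (p q : B -> R) : \bar R :=
  (2^-1 %:E * \esum_(y in [set: B]) (`|p y - q y|)%:E)%E.

Definition uniform_martingale {B : choiceType} (b : int -> T -> B) : Prop :=
  exists h : B -> T -> R, cond_dist_given_past b h /\
    forall e : R, 0 < e -> exists N : nat,
      {ae P, forall w, forall n : nat, (N <= n)%N ->
         (tv (cond_fin b n w) (fun y => h y w) <= e%:E)%E}.

End Processes.

From HB Require Import structures.
From mathcomp Require Import all_boot all_order all_algebra.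
From mathcomp Require Import all_classical all_reals all_analysis.
From mathcomp Require Import measurable_realfun lra.
Import Order.TTheory GRing.Theory Num.Theory.
Local Open Scope classical_set_scope.
Local Open Scope ring_scope.
Set Implicit Arguments. Unset Strict Implicit. Unset Printing Implicit Defensive.

(* Write p_k = P(a_0 = k).  By (iii), b_0 = F_{a_0}(b_{-1}, ..., b_{-a_0})
   almost surely, and by (ii) a_0 is independent of the past of b, hence
     P(b_0 = y, b_{-1..-n} = c)
       = sum_k p_k P(F_k(b_{-1..-k}) = y, b_{-1..-n} = c).
   So h(y) = sum_k p_k [F_k(b_{-1..-k}) = y] is the conditional distribution
   of b_0 given the entire past.  The first n past symbols determine the
   terms with k <= n, so the n-step conditional distribution and h both
   exceed the common head sum_(k <= n) p_k [F_k(...) = y] by nonnegative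
   tails of total mass P(a_0 > n), whatever the past; their total variation
   distance is therefore at most P(a_0 > n), which tends to 0.
   Only the instances i = 0 of (ii) and (iii) are used, since a uniform
   martingale only constrains b_0. *)

Lemma esum_nneseries_swap (R : realType) (Y : choiceType)
    (f : nat -> Y -> \bar R) (N : nat) :
  (forall k y, (0 <= f k y)%E) ->
  (\esum_(y in [set: Y]) \sum_(N <= k <oo) f k y =
   \sum_(N <= k <oo) \esum_(y in [set: Y]) f k y)%E.
Proof.
move=> f0; under eq_esum do rewrite eseries_cond nneseries_esum //.
rewrite eseries_cond nneseries_esum; last by move=> n _; exact: esum_ge0.
rewrite !esum_esum //; apply: (reindex_esum _ _ (fun x => (x.2, x.1))); split.
- by move=> [y k] [/= ? ?]; split.
- by move=> [y1 k1] [y2 k2] /= _ _ [-> ->].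
- by move=> [k y] [/= ? ?]; exists (y, k).
Qed.

Lemma esum_eq_single (R : realType) (Y : choiceType) (y0 : Y)
    (g : Y -> \bar R) :
  (forall y, y != y0 -> g y = 0%E) -> (0 <= g y0)%E ->
  (\esum_(y in [set: Y]) g y = g y0)%E.
Proof.
move=> g0 gy0; rewrite -(esum_set1 gy0) [RHS]esum_mkcond.
apply: eq_esum => y _; case: ifPn => // /negP yn; apply: g0; apply/eqP => E.
by apply: yn; rewrite inE.
Qed.

Section CountableRandomVariables.
Variables (R : realType) (d : measure_display) (T : measurableType d)
  (P : probability T R).

Definition window {X : Type} (f : nat -> T -> X) (n : nat) (w : T) : seq X :=
  [seq f k w | k <- iota 0 n].

Lemma windowP {X : eqType} (x0 : X) (f : nat -> T -> X) n w s :
  window f n w = s <->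
  size s = n /\ forall k, (k < n)%N -> f k w = nth x0 s k.
Proof.
split.
  move=> <-; rewrite /window size_map size_iota; split => // k kn.
  by rewrite (nth_map 0%N) ?size_iota // nth_iota.
move=> [sz fs]; apply: (@eq_from_nth _ x0).
  by rewrite /window size_map size_iota.
move=> k; rewrite /window size_map size_iota => kn.
by rewrite (nth_map 0%N) ?size_iota // nth_iota // fs.
Qed.

Lemma size_window {X : Type} (f : nat -> T -> X) n w : size (window f n w) = n.
Proof. by rewrite size_map size_iota. Qed.

Lemma window_take {X : Type} (f : nat -> T -> X) k m w : (k <= m)%N ->
  window f k w = take k (window f m w).
Proof. by move=> km; rewrite /window -map_take take_iota (minn_idPl km). Qed.

Lemma measurable_window {X : eqType} (x0 : X) (f : nat -> T -> X) :
  (forall k x, measurable [set w | f k w = x]) ->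
  forall n s, measurable [set w | window f n w = s].
Proof.
move=> fm n s; have [sz|sz] := eqVneq (size s) n; last first.
  rewrite (_ : [set _ | _] = set0) //; apply/seteqP; split => // w /=.
  by move/(windowP x0) => [ss _]; rewrite ss eqxx in sz.
rewrite (_ : [set _ | _] = \bigcap_k
    (if (k < n)%N then [set w | f k w = nth x0 s k] else setT)).
  by apply: bigcapT_measurable => k; case: ifP.
apply/seteqP; split => w /=.
  by move/(windowP x0) => [_ fs] k _; case: ifP => // /fs.
move=> fs; apply/(windowP x0); split => // k kn.
by have := fs k I; rewrite kn.
Qed.

Lemma pickle_fiber_Some (X : countType) (phi : T -> X) j x :
  pickle_inv j = Some x ->
  [set w | pickle (phi w) = j] = [set w | phi w = x].
Proof.
move=> jx; apply/seteqP; split => w /=.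
  move=> pj; have : pickle_inv j = Some (phi w) by rewrite -pj pickleK_inv.
  by rewrite jx => -[->].
by move=> px; move: jx; rewrite -px => jx; have := @pickle_invK X j; rewrite jx.
Qed.

Lemma pickle_fiber_None (X : countType) (phi : T -> X) j :
  @pickle_inv X j = None -> [set w | pickle (phi w) = j] = set0.
Proof.
move=> jN; apply/seteqP; split => // w /= pj.
by move: jN; rewrite -pj pickleK_inv.
Qed.

Lemma preimage_pred_of_fibers (M : set (set T)) (X : countType)
    (phi : T -> X) :
  M set0 ->
  (forall F : (set T)^nat, (forall n, M (F n)) -> M (\bigcup_n F n)) ->
  (forall x, M [set w | phi w = x]) ->
  forall Q : pred X, M [set w | Q (phi w)].
Proof.
move=> M0 MU Mx Q.
rewrite (_ : [set _ | _] =
    \bigcup_n ([set w | pickle (phi w) = n] `&` [set w | Q (phi w)])).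
  apply: MU => n; case jx: (pickle_inv n) => [x|]; last first.
    by rewrite (pickle_fiber_None _ jx) set0I.
  rewrite (pickle_fiber_Some _ jx); case Qx: (Q x).
    by rewrite (_ : _ `&` _ = [set w | phi w = x]) //; apply/seteqP; split;
      [move=> w [] | move=> w /= wx; rewrite wx].
  by rewrite (_ : _ `&` _ = set0) //; apply/seteqP; split => // w /= [-> ];
    rewrite Qx.
apply/seteqP; split => w /=; first by move=> Qw; exists (pickle (phi w)).
by move=> [n _ [_ ->]].
Qed.

Lemma measurable_preimage_pred (X : countType) (phi : T -> X) :
  (forall x, measurable [set w | phi w = x]) ->
  forall Q : pred X, measurable [set w | Q (phi w)].
Proof.
move=> mphi; apply: preimage_pred_of_fibers => // F.
exact: bigcupT_measurable.
Qed.

Lemma measurable_pickle_fiber (X : countType) (phi : T -> X) :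
  (forall x, measurable [set w | phi w = x]) ->
  forall n, measurable [set w | pickle (phi w) = n].
Proof.
move=> mphi n; rewrite (_ : [set _ | _] = [set w | pickle (phi w) == n]).
  exact: (measurable_preimage_pred mphi (fun x => pickle x == n)).
by apply/seteqP; split => w /= /eqP.
Qed.

Lemma pr_EFin (E : set T) : measurable E -> P E = (pr P E)%:E.
Proof.
move=> mE; rewrite /pr fineK // ge0_fin_numE //.
by rewrite (le_lt_trans (probability_le1 P mE)) // ltey.
Qed.

Lemma pr_ge0 (E : set T) : 0 <= pr P E.
Proof. by rewrite /pr fine_ge0. Qed.

Lemma measure_partition_nat (phi : T -> nat) (S : set T) :
  (forall n, measurable [set w | phi w = n]) -> measurable S ->
  P S = (\sum_(n <oo) P (S `&` [set w | phi w = n]))%E.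
Proof.
move=> mphi mS; rewrite -measure_semi_bigcup.
- congr (P _); apply/seteqP; split => w /=; first by move=> Sw; exists (phi w).
  by move=> [n _ []].
- by move=> n; exact: measurableI.
- by move=> i j _ _ [w [[_ <-] [_ <-]]].
- by apply: bigcupT_measurable => n; exact: measurableI.
Qed.

Lemma esumZ_measure_fibers (X : countType) (phi : T -> X) (S : set T)
    (r : R) :
  (forall x, measurable [set w | phi w = x]) -> measurable S -> 0 <= r ->
  (\esum_(x in [set: X]) r%:E * P (S `&` [set w | phi w = x]) =
   r%:E * P S)%E.
Proof.
move=> mphi mS r0.
rewrite (measure_partition_nat (measurable_pickle_fiber mphi) mS).
rewrite -nneseriesZl // nneseries_esumT; last by move=> n; rewrite mule_ge0.
transitivity (\esum_(n in pickle @` [set: X])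
    (r%:E * P (S `&` [set w | pickle (phi w) = n]))%E); last first.
  rewrite esum_mkcond; apply: eq_esum => n _; case: ifPn => // nX.
  rewrite (_ : _ `&` _ = set0) ?measure0 ?mule0 //.
  apply/seteqP; split => // w /= [_ pn]; move/negP: nX; apply.
  by rewrite inE; exists (phi w).
rewrite esum_image; last by move=> x y _ _; exact: (pcan_inj (@pickleK_inv X)).
apply: eq_esum => x _; congr (_ * P _)%E; apply/seteqP; split => w /= [Sw wx].
  by split => //; rewrite wx.
by split => //; exact: (pcan_inj (@pickleK_inv X)).
Qed.

Lemma indep_preimage_of_fibers (X : countType) (phi : T -> X) (A : set T)
    (r : R) :
  (forall x, measurable [set w | phi w = x]) -> measurable A -> 0 <= r ->
  (forall x,
     P (A `&` [set w | phi w = x]) = (r%:E * P [set w | phi w = x])%E) ->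
  forall Q : pred X,
    P (A `&` [set w | Q (phi w)]) = (r%:E * P [set w | Q (phi w)])%E.
Proof.
move=> mphi mA r0 Aindep Q.
have mQ := measurable_preimage_pred mphi Q.
have fiberQ x : [set w | Q (phi w)] `&` [set w | phi w = x] =
    if Q x then [set w | phi w = x] else set0.
  apply/seteqP; split => w /=; first by case=> Qw wx; rewrite -wx Qw.
  by case: ifP => // Qx wx; rewrite wx.
rewrite -(esumZ_measure_fibers mphi mQ r0) -[P (A `&` _)]mul1e.
rewrite -(esumZ_measure_fibers mphi (measurableI _ _ mA mQ) ler01).
apply: eq_esum => x _; rewrite mul1e -setIA fiberQ.
by case: (Q x); rewrite ?Aindep ?setI0 ?measure0 ?mule0.
Qed.

Lemma measure_eq_mod_null (X Y N : set T) : measurable X -> measurable Y ->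
  measurable N -> P N = 0%E -> X `\` N = Y `\` N -> P X = P Y.
Proof.
move=> mX mY mN PN XY.
have PD Z : measurable Z -> P Z = P (Z `\` N).
  move=> mZ; rewrite measureD //; last first.
    by rewrite (le_lt_trans (probability_le1 P mZ)) // ltey.
  have mZN : measurable (Z `&` N) by exact: measurableI.
  by rewrite (subset_measure0 mZN mN (@subIsetr _ Z N) PN) sube0.
by rewrite (PD X mX) (PD Y mY) XY.
Qed.

Lemma negligible_null_atoms (X : countType) (phi : T -> X) :
  (forall x, measurable [set w | phi w = x]) ->
  P.-negligible [set w | P [set w' | phi w' = phi w] = 0%E].
Proof.
move=> mphi; set Z := [set w | _].
have mZ : measurable Z.
  rewrite (_ : Z = [set w | P [set w' | phi w' = phi w] == 0%E]).
    exact: (measurable_preimage_pred mphi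
      (fun x => P [set w | phi w = x] == 0%E)).
  by apply/seteqP; split => w /= /eqP.
exists Z; split => //.
rewrite (measure_partition_nat (measurable_pickle_fiber mphi) mZ).
rewrite eseries0 // => j _ _; case jx: (@pickle_inv X j) => [x|]; last first.
  by rewrite (pickle_fiber_None _ jx) setI0.
rewrite (pickle_fiber_Some _ jx).
have [Px0|Px0] := eqVneq (P [set w | phi w = x]) 0%E.
  apply: (subset_measure0 (measurableI _ _ mZ (mphi x)) (mphi x) _ Px0).
  exact: subIsetr.
rewrite (_ : _ `&` _ = set0) ?measure0 //.
apply/seteqP; split => // w /= [Zw wx]; move: Zw; rewrite /Z /= wx => Px.
by rewrite Px eqxx in Px0.
Qed.

End CountableRandomVariables.

Section WindowRule.
Variables (R : realType) (d : measure_display) (T : measurableType d)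
  (P : probability T R) (B : countType)
  (a : int -> T -> nat) (b : int -> T -> B).
Hypotheses (a_meas : discrete_process a) (b_meas : discrete_process b).

Let y0 : B := b 0 point.

Definition bpast n w := window (fun k => b (- (k.+1)%:Z)) n w.
Definition apast n w := window (fun k => a (- (k.+1)%:Z)) n w.
Definition atom n c := [set w | bpast n w = c].

Lemma measurable_atom n c : measurable (atom n c).
Proof. by apply: (measurable_window y0) => k x; exact: b_meas. Qed.

Lemma measurable_bpast_pred n (Q : pred (seq B)) :
  measurable [set w | Q (bpast n w)].
Proof. by apply: measurable_preimage_pred => s; exact: measurable_atom. Qed.

Lemma past_cylE n z : past_cyl b n z = atom n (map z (iota 0 n)).
Proof.
apply/seteqP; split => w /=.
  move=> bz; apply/eq_in_map => k; rewrite mem_iota add0n => /andP [_ kn].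
  exact: bz.
move=> /(windowP y0) [_ bz] k kn; rewrite bz //.
by rewrite (nth_map 0%N) ?size_iota // nth_iota.
Qed.

Lemma past_sigma_bpast_pred N (Q : pred (seq B)) :
  past_sigma b [set w | Q (bpast N w)].
Proof.
apply: preimage_pred_of_fibers.
- exact: sigma_algebra0.
- by move=> F sF; exact: sigma_algebra_bigcup.
move=> s; have [ss|ss] := eqVneq (size s) N; last first.
  rewrite (_ : [set _ | _] = set0); first exact: sigma_algebra0.
  apply/seteqP; split => // w /= bs; move/eqP: ss; apply.
  by rewrite -bs size_window.
rewrite (_ : [set _ | _] = past_cyl b N (nth y0 s)).
  by apply: sub_sigma_algebra; exists N, (nth y0 s).
by rewrite past_cylE -ss -/(mkseq _ _) mkseq_nth.
Qed.

Definition pa0 k := pr P [set w | a 0 w = k].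

Lemma pa0E k : P [set w | a 0 w = k] = (pa0 k)%:E.
Proof. by rewrite pr_EFin //; exact: a_meas. Qed.

Lemma pa0_ge0 k : 0 <= pa0 k.
Proof. exact: pr_ge0. Qed.

Lemma sum_pa0 : (\sum_(k <oo) (pa0 k)%:E = 1)%E.
Proof.
rewrite -(probability_setT P) (measure_partition_nat P (a_meas 0) measurableT).
by apply: eq_eseriesr => k _; rewrite setTI pa0E.
Qed.

Definition tail_pa0 n := (\sum_(n.+1 <= k <oo) (pa0 k)%:E)%E.

Lemma tail_pa0_ge0 n : (0 <= tail_pa0 n)%E.
Proof. by apply: nneseries_ge0 => k _ _; rewrite lee_fin pa0_ge0. Qed.

Lemma tail_pa0_fin n : tail_pa0 n \is a fin_num.
Proof.
rewrite ge0_fin_numE ?tail_pa0_ge0 // (@le_lt_trans _ _ 1%E) ?ltey //.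
rewrite -sum_pa0 (nneseries_split 0 n.+1) ?add0n; last first.
  by move=> k _; rewrite lee_fin pa0_ge0.
by rewrite leeDr // sume_ge0 // => k _; rewrite lee_fin pa0_ge0.
Qed.

Lemma tail_pa0_small e : 0 < e ->
  exists N, forall n, (N <= n)%N -> (tail_pa0 n <= e%:E)%E.
Proof.
move=> e0.
have : (\sum_(N <= k <oo) (pa0 k)%:E)%E @[N --> \oo] --> (0:R)%:E.
  apply: nneseries_tail_cvg; last by move=> k _; rewrite lee_fin pa0_ge0.
  by rewrite sum_pa0 ltey.
move/fine_cvgP => [_ /cvgrPdist_lt /(_ e e0) [M _ HM]].
exists M => n Mn; have := HM n.+1 (leq_trans Mn (leqnSn n)).
rewrite /= sub0r normrN -[tail_pa0 n](fineK (tail_pa0_fin n)) lee_fin.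
by move=> lt; apply: ltW; apply: le_lt_trans lt; rewrite ler_norm.
Qed.

Definition neg_indices m := [seq - (i.+1)%:Z | i <- iota 0 m].

Lemma apast_bpast_atomE m (u : seq nat) (s : seq B) :
  size u = m -> size s = m ->
  [set w | (apast m w, bpast m w) = (u, s)] =
  [set w | forall j, j \in neg_indices m ->
     a j w = nth 0%N u (absz j).-1 /\ b j w = nth y0 s (absz j).-1].
Proof.
move=> su ss; apply/seteqP; split => w /=.
  case=> au bs j /mapP [i]; rewrite mem_iota add0n => /andP [_ im] ->.
  rewrite abszN /=; split.
    by move: au => /(windowP 0%N) [_ ->].
  by move: bs => /(windowP y0) [_ ->].
have idx i : (i < m)%N -> - (i.+1)%:Z \in neg_indices m.
  by move=> im; apply/mapP; exists i; rewrite ?mem_iota.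
move=> ab; congr pair.
  apply/(windowP 0%N); split => // i im.
  by have [] := ab _ (idx i im); rewrite abszN.
apply/(windowP y0); split => // i im.
by have [] := ab _ (idx i im); rewrite abszN.
Qed.

Hypothesis a_indep : indep_of_past P a b.

Lemma indep_a0_bpast m (Q : pred (seq B)) k :
  P ([set w | a 0 w = k] `&` [set w | Q (bpast m w)]) =
  ((pa0 k)%:E * P [set w | Q (bpast m w)])%E.
Proof.
pose phi w := (apast m w, bpast m w).
have mphi (x : seq nat * seq B) : measurable [set w | phi w = x].
  case: x => u s; rewrite (_ : [set _ | _] =
      [set w | apast m w = u] `&` [set w | bpast m w = s]).
    apply: measurableI; last exact: measurable_atom.
    by apply: (measurable_window 0%N) => k' x; exact: a_meas.
  by apply/seteqP; split => w /=; rewrite /phi; [case=> -> -> | case=> -> ->].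
apply: (indep_preimage_of_fibers mphi (a_meas 0 k) (pa0_ge0 k) _ (Q \o snd)).
case=> u s; rewrite /phi.
have [/andP [/eqP su /eqP ss]|sz] := boolP ((size u == m) && (size s == m));
    last first.
  rewrite (_ : [set w | (apast m w, bpast m w) = (u, s)] = set0).
    by rewrite setI0 measure0 mule0.
  apply/seteqP; split => // w /= [au bs]; move: sz.
  by rewrite -au -bs !size_window eqxx.
have mJ := mphi (u, s); rewrite /phi (apast_bpast_atomE su ss) in mJ *.
rewrite (pr_EFin P (measurableI _ _ (a_meas 0 k) mJ)) (pr_EFin P mJ).
rewrite a_indep ?EFinM //.
by apply/allP => j /mapP [i _ ->]; rewrite oppr_lt0 ltz_nat.
Qed.

Variable F : nat -> seq B -> B.
Hypothesis b0_rule : {ae P, forall w, b 0 w =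
  F (a 0 w) [seq b (0 - (k.+1)%:Z) w | k <- iota 0 (a 0 w)]}.

Definition rule y k := [set w | F k (bpast k w) = y].

Lemma measurable_rule y k : measurable (rule y k).
Proof.
rewrite (_ : rule y k = [set w | F k (bpast k w) == y]).
  exact: (measurable_bpast_pred k (fun s => F k s == y)).
by apply/seteqP; split => w /= /eqP.
Qed.

Lemma indic_rule y k w : \1_(rule y k) w = (F k (bpast k w) == y)%:R :> R.
Proof.
by rewrite /indic; case: eqP => ?; [rewrite mem_set | rewrite memNset].
Qed.

Lemma rule_atomE y k n c : rule y k `&` atom n c =
  [set w | (fun t => (F k (take k t) == y) && (take n t == c))
             (bpast (maxn k n) w)].
Proof.
apply/seteqP; split => w; rewrite /rule /atom /bpast /=;
  rewrite -(window_take _ _ (leq_maxl k n)) -(window_take _ _ (leq_maxr k n)).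
  by case=> -> ->; rewrite !eqxx.
by case/andP => /eqP -> /eqP ->.
Qed.

(* The law of total probability over the value k of a_0, where the window
   rule replaces b_0 up to a null set and a_0 factors out by independence. *)
Lemma measure_b0_atom y n c : P ([set w | b 0 w = y] `&` atom n c) =
  (\sum_(k <oo) (pa0 k)%:E * P (rule y k `&` atom n c))%E.
Proof.
have mS : measurable ([set w | b 0 w = y] `&` atom n c).
  by apply: measurableI; [exact: b_meas | exact: measurable_atom].
rewrite (measure_partition_nat P (a_meas 0) mS); apply: eq_eseriesr => k _.
rewrite rule_atomE.
rewrite -(indep_a0_bpast _ (fun t => (F k (take k t) == y) && (take n t == c))).
rewrite -rule_atomE.
have [N [mN PN ruleN]] := b0_rule.
have b0E w : ~ N w -> b 0 w = F (a 0 w) (bpast (a 0 w) w).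
  move=> Nw; have -> :
      b 0 w = F (a 0 w) [seq b (0 - (k.+1)%:Z) w | k <- iota 0 (a 0 w)].
    by apply: contrapT => bw; apply: Nw; exact: ruleN.
  by congr F; apply: eq_map => i; rewrite sub0r.
apply: (measure_eq_mod_null _ _ mN PN).
- by apply: measurableI => //; exact: a_meas.
- apply: measurableI; first exact: a_meas.
  by apply: measurableI; [exact: measurable_rule | exact: measurable_atom].
apply/seteqP; split => w /=.
  by move=> [[[b0y C] ak] Nw]; do ! split => //; rewrite /rule /= -ak -b0y b0E.
by move=> [[ak [Rw C]] Nw]; do ! split => //; rewrite b0E // ak.
Qed.

Lemma rule_term_ge0 y k w : (0 <= (pa0 k * \1_(rule y k) w)%:E)%E.
Proof. by rewrite lee_fin mulr_ge0 ?pa0_ge0. Qed.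

Definition econd_past y w := (\sum_(k <oo) (pa0 k * \1_(rule y k) w)%:E)%E.
Definition cond_past y w := fine (econd_past y w).

Lemma econd_past_ge0 y w : (0 <= econd_past y w)%E.
Proof. by apply: nneseries_ge0 => k _ _; exact: rule_term_ge0. Qed.

Lemma econd_past_fin y w : econd_past y w \is a fin_num.
Proof.
rewrite ge0_fin_numE ?econd_past_ge0 // (@le_lt_trans _ _ 1%E) ?ltey //.
rewrite -sum_pa0; apply: lee_nneseries => [k _ _|k _].
  exact: rule_term_ge0.
by rewrite lee_fin indic_rule; case: eqP; rewrite ?mulr1 ?mulr0 ?pa0_ge0.
Qed.

Lemma cond_pastE y w : (cond_past y w)%:E = econd_past y w.
Proof. by rewrite fineK // econd_past_fin. Qed.

(* For each k exactly one y satisfies the rule, so the sum over y of the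
   k-th terms is p_k. *)
Lemma esum_rule_series N w :
  (\esum_(y in [set: B]) \sum_(N <= k <oo) (pa0 k * \1_(rule y k) w)%:E =
   \sum_(N <= k <oo) (pa0 k)%:E)%E.
Proof.
rewrite esum_nneseries_swap; last by move=> k y; exact: rule_term_ge0.
apply: eq_eseriesr => k _; rewrite (@esum_eq_single _ _ (F k (bpast k w))).
- by rewrite indic_rule eqxx mulr1.
- by move=> y yn; rewrite indic_rule eq_sym (negPf yn) mulr0.
- exact: rule_term_ge0.
Qed.

Lemma integral_econd_past y n c : (\int[P]_(w in atom n c) econd_past y w =
  \sum_(k <oo) (pa0 k)%:E * P (rule y k `&` atom n c))%E.
Proof.
have mC := measurable_atom n c.
rewrite integral_nneseries //; first last.
- by move=> k w _; exact: rule_term_ge0.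
- move=> k; apply/measurable_EFinP; apply: measurable_funM.
    exact: measurable_cst.
  by apply: measurable_indic; exact: measurable_rule.
apply: eq_eseriesr => k _; under eq_integral do rewrite EFinM.
rewrite ge0_integralZl_EFin ?pa0_ge0 //.
- by rewrite integral_indic //; exact: measurable_rule.
- by apply/measurable_EFinP; apply: measurable_indic; exact: measurable_rule.
Qed.

Lemma econd_past_partialE y N w :
  (\sum_(0 <= k < N) (pa0 k * \1_(rule y k) w)%:E)%E =
  (\sum_(0 <= k < N) (pa0 k * (F k (take k (bpast N w)) == y)%:R)%:E)%E.
Proof.
apply: eq_big_nat => k /andP [_ kN].
by rewrite indic_rule /bpast -(window_take _ _ (ltnW kN)).
Qed.

(* cond_past y w < r iff for some m every partial sum is at most
   r - 1/(m+1), and each partial sum depends on finitely many past symbols. *)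
Lemma past_sigma_cond_past_lt y r : past_sigma b [set w | cond_past y w < r].
Proof.
pose S N w := (\sum_(0 <= k < N) (pa0 k * \1_(rule y k) w)%:E)%E.
rewrite (_ : [set _ | _] = \bigcup_m (setT `\` \bigcup_N
    (setT `\` [set w | (S N w <= (r - m.+1%:R^-1)%:E)%E]))).
  apply: sigma_algebra_bigcup => m; apply: sigma_algebraCD.
  apply: sigma_algebra_bigcup => N; apply: sigma_algebraCD.
  set Q := fun t => (\sum_(0 <= k < N) (pa0 k * (F k (take k t) == y)%:R)%:E
                     <= (r - m.+1%:R^-1)%:E)%E.
  rewrite (_ : [set w | _] = [set w | Q (bpast N w)]).
    exact: past_sigma_bpast_pred.
  by apply/seteqP; split => w; rewrite /= /S econd_past_partialE.
have S_le N w : (S N w <= econd_past y w)%E.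
  by apply: nneseries_lim_ge => k _ _; exact: rule_term_ge0.
apply/seteqP; split => w /=.
  move=> hr; have rh : 0 < r - cond_past y w by rewrite subr_gt0.
  have [m _ /(_ m (leqnn m)) /= hm] := near_infty_natSinv_lt (PosNum rh).
  exists m => //; split => // -[N _ [_ SN]]; apply: SN.
  apply: (le_trans (S_le N w)); rewrite -cond_pastE lee_fin.
  by rewrite lerBrDr -lerBrDl ltW.
move=> [m _ [_ Sm]].
have : (econd_past y w <= (r - m.+1%:R^-1)%:E)%E.
  apply: lime_le.
    by apply: is_cvg_nneseries => k _ _; exact: rule_term_ge0.
  by apply: nearW => N; apply: contrapT => SN; apply: Sm; exists N.
rewrite -cond_pastE lee_fin => /le_lt_trans; apply.
by rewrite ltrBlDr ltrDl invr_gt0 ltr0n.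
Qed.

Lemma cond_dist_given_past_cond_past : cond_dist_given_past P b cond_past.
Proof.
split; [exact: past_sigma_cond_past_lt | split; [ | split]].
- by move=> y w; apply: fine_ge0; exact: econd_past_ge0.
- move=> w; under eq_esum do rewrite cond_pastE.
  by rewrite esum_rule_series sum_pa0.
- move=> y n z; rewrite past_cylE measure_b0_atom -integral_econd_past.
  by apply: eq_integral => w _; rewrite cond_pastE.
Qed.

Lemma rule_atom_known y k n w : (k <= n)%N ->
  rule y k `&` atom n (bpast n w) =
  if F k (bpast k w) == y then atom n (bpast n w) else set0.
Proof.
move=> kn; have bk w' : atom n (bpast n w) w' -> bpast k w' = bpast k w.
  move=> /= e; rewrite /bpast (window_take _ _ kn) [RHS](window_take _ _ kn).
  by congr take.
apply/seteqP; split => w'; rewrite /rule /=.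
  by move=> [Rw' Cw']; rewrite -(bk w' Cw') Rw' eqxx.
by case: eqP => //= <- Cw'; split => //; rewrite bk.
Qed.

Lemma measure_rule_atom_known y k n w : (k <= n)%N ->
  P (rule y k `&` atom n (bpast n w)) =
  ((\1_(rule y k) w)%:E * P (atom n (bpast n w)))%E.
Proof.
move=> kn; rewrite rule_atom_known // indic_rule.
by case: eqP; rewrite ?mul1e ?mul0e ?measure0.
Qed.

Definition cond_head n y w := \sum_(0 <= k < n.+1) pa0 k * \1_(rule y k) w.

Definition econd_past_tail n y w :=
  (\sum_(n.+1 <= k <oo) (pa0 k * \1_(rule y k) w)%:E)%E.

Definition ejoint_tail n y w :=
  (\sum_(n.+1 <= k <oo) (pa0 k)%:E * P (rule y k `&` atom n (bpast n w)))%E.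

Lemma econd_past_tail_ge0 n y w : (0 <= econd_past_tail n y w)%E.
Proof. by apply: nneseries_ge0 => k _ _; exact: rule_term_ge0. Qed.

Lemma ejoint_tail_ge0 n y w : (0 <= ejoint_tail n y w)%E.
Proof.
by apply: nneseries_ge0 => k _ _; rewrite mule_ge0 // lee_fin pa0_ge0.
Qed.

Lemma econd_past_split n y w :
  econd_past y w = ((cond_head n y w)%:E + econd_past_tail n y w)%E.
Proof.
rewrite /econd_past (nneseries_split 0 n.+1); last first.
  by move=> k _; exact: rule_term_ge0.
by rewrite add0n /cond_head -sumEFin.
Qed.

Lemma measure_b0_atom_split n y w :
  P ([set w' | b 0 w' = y] `&` atom n (bpast n w)) =
  ((cond_head n y w * pr P (atom n (bpast n w)))%:E + ejoint_tail n y w)%E.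
Proof.
rewrite measure_b0_atom (nneseries_split 0 n.+1); last first.
  by move=> k _; rewrite mule_ge0 // lee_fin pa0_ge0.
rewrite add0n /cond_head mulr_suml -sumEFin; congr (_ + _)%E.
apply: eq_big_nat => k /andP [_ kn].
rewrite measure_rule_atom_known // (pr_EFin P (measurable_atom _ _)).
by rewrite muleA -!EFinM.
Qed.

Lemma cond_fin_cond_past_dist n y w : 0 < pr P (atom n (bpast n w)) ->
  ((`|cond_fin P b n w y - cond_past y w|)%:E <=
   ((pr P (atom n (bpast n w)))^-1)%:E * ejoint_tail n y w +
   econd_past_tail n y w)%E.
Proof.
set C := atom n (bpast n w); set cr := pr P C => cr0.
have mb0C : measurable ([set w' | b 0 w' = y] `&` C).
  by apply: measurableI; [exact: b_meas | exact: measurable_atom].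
have jfin : ejoint_tail n y w \is a fin_num.
  have : P ([set w' | b 0 w' = y] `&` C) \is a fin_num by rewrite pr_EFin.
  by rewrite measure_b0_atom_split fin_numD => /andP [].
have cfin : econd_past_tail n y w \is a fin_num.
  have := econd_past_fin y w.
  by rewrite (econd_past_split n) fin_numD => /andP [].
have cond_finE :
    cond_fin P b n w y = cond_head n y w + fine (ejoint_tail n y w) / cr.
  rewrite /cond_fin (_ : past_cyl b n (past_of b w) = C).
    rewrite /pr measure_b0_atom_split -(fineK jfin) -EFinD /= -/(pr P C).
    by rewrite mulrDl mulrK ?unitfE ?gt_eqF.
  by rewrite past_cylE.
have cond_past_headE :
    cond_past y w = cond_head n y w + fine (econd_past_tail n y w).
  by rewrite /cond_past (econd_past_split n) -(fineK cfin) -EFinD.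
rewrite -[X in (_ <= _ * X + _)%E](fineK jfin).
rewrite -[X in (_ <= _ + X)%E](fineK cfin).
rewrite cond_finE cond_past_headE -EFinM -EFinD lee_fin [_^-1 * _]mulrC.
set x := fine (ejoint_tail n y w); set h := fine (econd_past_tail n y w).
have x0 : 0 <= x / cr.
  by rewrite divr_ge0 ?(ltW cr0) // fine_ge0 // ejoint_tail_ge0.
have h0 : 0 <= h by rewrite fine_ge0 // econd_past_tail_ge0.
by rewrite ler_norml; apply/andP; split; lra.
Qed.

Lemma esum_ejoint_tail n w : 0 < pr P (atom n (bpast n w)) ->
  (\esum_(y in [set: B])
     ((pr P (atom n (bpast n w)))^-1)%:E * ejoint_tail n y w = tail_pa0 n)%E.
Proof.
set C := atom n (bpast n w); set cr := pr P C => cr0.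
have PC : P C = cr%:E by rewrite pr_EFin //; exact: measurable_atom.
transitivity (\esum_(y in [set: B]) \sum_(n.+1 <= k <oo)
    ((cr^-1)%:E * ((pa0 k)%:E * P (rule y k `&` C))))%E.
  apply: eq_esum => y _; rewrite -nneseriesZl // => k _.
  by rewrite mule_ge0 // lee_fin pa0_ge0.
rewrite esum_nneseries_swap; last first.
  by move=> k y; rewrite !mule_ge0 // lee_fin ?pa0_ge0 // invr_ge0 ltW.
apply: eq_eseriesr => k _.
transitivity (\esum_(y in [set: B])
    ((cr^-1 * pa0 k)%:E * P (C `&` [set w' | F k (bpast k w') = y])))%E.
  by apply: eq_esum => y _; rewrite muleA -EFinM setIC.
rewrite esumZ_measure_fibers; last 3 first.
- by move=> y; exact: measurable_rule.
- exact: measurable_atom.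
- by rewrite mulr_ge0 ?pa0_ge0 // invr_ge0 ltW.
by rewrite PC -EFinM mulrAC mulVf ?gt_eqF // mul1r.
Qed.

Lemma tv_cond_fin_cond_past n w : 0 < pr P (atom n (bpast n w)) ->
  (tv (cond_fin P b n w) (cond_past^~ w) <= tail_pa0 n)%E.
Proof.
move=> cr0; rewrite /tv; apply: le_trans.
  apply: lee_wpmul2l; first by rewrite lee_fin invr_ge0.
  by apply: le_esum => y _; exact: cond_fin_cond_past_dist.
rewrite esumD; last 2 first.
- by move=> y _; rewrite mule_ge0 ?ejoint_tail_ge0 // lee_fin invr_ge0 ltW.
- by move=> y _; exact: econd_past_tail_ge0.
rewrite esum_ejoint_tail // esum_rule_series -/(tail_pa0 n).
rewrite -(fineK (tail_pa0_fin n)) -EFinD -EFinM lee_fin.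
by set t := fine (tail_pa0 n); lra.
Qed.

Lemma ae_tv_cond_fin_cond_past : {ae P, forall w n,
  (tv (cond_fin P b n w) (cond_past^~ w) <= tail_pa0 n)%E}.
Proof.
apply: negligibleS (negligible_bigcup (fun n =>
  @negligible_null_atoms _ _ _ P _ (bpast n) (measurable_atom n))).
move=> w /= tvw; apply: contrapT => atomw; apply: tvw => n.
apply: tv_cond_fin_cond_past; rewrite lt_neqAle pr_ge0 andbT eq_sym.
apply/negP => /eqP pr0; apply: atomw; exists n => //=.
by rewrite (pr_EFin P (measurable_atom _ _)) pr0.
Qed.

End WindowRule.

Theorem mainTheorem9 (R : realType) (d : measure_display) (T : measurableType d)
  (P : probability T R) (B : countType)
  (a : int -> T -> nat) (b : int -> T -> B)
  (a_meas : discrete_process a) (b_meas : discrete_process b)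
  (a_pos : forall (i : int) (w : T), (0 < a i w)%N)
  (stat : jointly_stationary P a b)
  (a_iid : iid P a)
  (a_indep : indep_of_past P a b)
  (b_det : determined_by_window P a b) :
  uniform_martingale P b.
Proof.
have [F b0_rule] := b_det 0.
exists (cond_past P a b F); split.
  exact: (cond_dist_given_past_cond_past a_meas b_meas a_indep b0_rule).
move=> e e0; have [N tailN] := tail_pa0_small P a_meas e0.
exists N.
apply: filterS (ae_tv_cond_fin_cond_past a_meas b_meas a_indep b0_rule).
by move=> w tvw n Nn; exact: le_trans (tvw n) (tailN n Nn).
Qed.
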